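(* Let $f$, $F$, $B$, $B_F$ and the map $e^{(F-f)/z}:B_F\to B((z))[[\mathbf s]]$ be as in the context. Then $e^{(F-f)/z}$ extends to a $\mathbb C((z))[[\mathbf s]]$-linear isomorphism $$e^{(F-f)/z}:B_F((z))[[\mathbf s]]\to B((z))[[\mathbf s]].$$
   Context: $f:\mathbb C^n\to\mathbb C$ is a weighted homogeneous polynomial with an isolated critical point at $0$, weights $q_i=\deg x_i$. $\mathcal H^{(0)}_f=\Omega^n_{X,0}[[z]]/(df+z\,d)\Omega^{n-1}_{X,0}$ (germs of holomorphic forms at $0\in X=\mathbb C^n$), a free $\mathbb C[[z]]$-module of rank $\mu$ (Milnor number), and $\mathcal H_f=\mathcal H^{(0)}_f\otimes_{\mathbb C[[z]]}\mathbb C((z))$; $[\varphi]$ denotes the class of a form. Let $\phi_1=1,\phi_2,\dots,\phi_\mu\in\mathbb C[\mathbf x]$ be weighted homogeneous polynomials such that $\{[\phi_\alpha d^n\mathbf x]\}$ ($d^n\mathbf x=dx_1\cdots dx_n$) is a good basis (in particular a $\mathbb C[[z]]$-basis of $\mathcal H^{(0)}_f$ whose span is the image of a good section). $F(\mathbf x,\mathbf s)=f+\sum_\alpha s_\alpha\phi_\alpha$. $B=\mathrm{Span}_{\mathbb C}\{[\phi_\alpha d^n\mathbf x]\}\subset\mathcal H^{(0)}_f$, so $\mathcal H_f=B((z))$; $B_F=\mathrm{Span}_{\mathbb C}\{\phi_\alpha d^n\mathbf x\}$ is another copy of this vector space. $\mathbb C[\mathbf s]_k$ = homogeneous polynomials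 of degree $k$ in $s_1,\dots,s_\mu$. Expand in $\mathcal H_f\otimes\mathbb C[\mathbf s]_k$: $[z^{-k}(F-f)^k\phi_\alpha d^n\mathbf x]=\sum_{m\ge-k}\sum_\beta h^{(k)}_{\alpha\beta,m}z^m[\phi_\beta d^n\mathbf x]$ with $h^{(k)}_{\alpha\beta,m}\in\mathbb C[\mathbf s]_k$, and define $e^{(F-f)/z}(\phi_\alpha d^n\mathbf x)=\sum_{k\ge0}\sum_\beta\sum_{m\ge-k}h^{(k)}_{\alpha\beta,m}\frac{z^m}{k!}[\phi_\beta d^n\mathbf x]\in B((z))[[\mathbf s]]$, extended $\mathbb C$-linearly to $B_F$. *)

From HB Require Import structures.
From mathcomp Require Import all_boot all_order all_algebra.
From mathcomp Require Import mpoly complex Rstruct.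
From Stdlib Require Import ClassicalEpsilon.

Set Implicit Arguments.
Unset Strict Implicit.
Unset Printing Implicit Defensive.

Import Order.TTheory GRing.Theory Num.Theory.
Local Open Scope ring_scope.

Definition C : numClosedFieldType := (Rdefinitions.R)[i].

(* Germs of holomorphic functions at 0 in C^n, as convergent power     *)
(* series: coefficient functions on monomials x^m.                     *)
Definition germ (n : nat) := 'X_{1..n} -> C.

Definition convergent n (a : germ n) : Prop :=
  exists r M : C, 0 < r /\ forall m : 'X_{1..n}, `|a m| * r ^+ mdeg m <= M.

Definition pgerm n (p : {mpoly C[n]}) : germ n := fun m => p@_m.

Definition gmul n (a b : germ n) : germ n := fun m =>
  \sum_(m1 : 'X_{1..n < (mdeg m).+1} | (m1 <= m)%MM) a m1 * b (m - m1)%MM.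

Definition gder n (i : 'I_n) (a : germ n) : germ n := fun m =>
  (m i).+1%:R * a (m + U_(i))%MM.

(* O_{X,0}[[z]] : formal power series in z with germ coefficients;
   a form g d^n x in Omega^n_{X,0}[[z]] is represented by g. *)
Definition zseries n := nat -> germ n.
Definition holz n (g : zseries n) : Prop := forall j, convergent (g j).

(* g d^n x lies in (df + z d) Omega^{n-1}_{X,0}[[z]].
   For eta = sum_i eta_i dx_1..(dx_i omitted)..dx_n (eta_i in O[[z]]),
   (df + z d) eta = sum_i (-1)^(i) (d_i f eta_i + z d_i eta_i) d^n x
   (i counted from 0). *)
Definition dfzd_exact n (f : {mpoly C[n]}) (g : zseries n) : Prop :=
  exists eta : 'I_n -> zseries n,
    (forall i, holz (eta i)) /\
    forall (j : nat) (m : 'X_{1..n}),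
      g j m = \sum_(i < n) (-1) ^+ i *
                (gmul (pgerm (mderiv i f)) (eta i j) m
                 + (if j is j'.+1 then gder i (eta i j') m else 0)).

Definition lincomb n mu (c : 'I_mu -> nat -> C) (phi : 'I_mu -> {mpoly C[n]})
  : zseries n := fun j m => \sum_(a < mu) c a j * (phi a)@_m.

(* {[phi_a d^n x]} is a C[[z]]-basis of H^(0)_f
   = Omega^n_{X,0}[[z]] / (df + z d) Omega^{n-1}_{X,0}[[z]]. *)
Definition is_H0_basis n mu (f : {mpoly C[n]}) (phi : 'I_mu -> {mpoly C[n]}) : Prop :=
  (forall g : zseries n, holz g ->
     exists c : 'I_mu -> nat -> C,
       dfzd_exact f (fun j m => g j m - lincomb c phi j m)) /\
  (forall c : 'I_mu -> nat -> C,
     dfzd_exact f (lincomb c phi) -> forall a j, c a j = 0).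

(* Forms in Omega^n_{X,0}[[z]] tensor C((z)) : Laurent series in z
   (only bounded-below ones are meaningful).  Equality of classes in
   H_f = H^(0)_f tensor_{C[[z]]} C((z)):  [g1] = [g2] iff for some N,
   g1 - g2 vanishes below z^(-N) and z^N (g1 - g2) is (df+zd)-exact. *)
Definition lform n := int -> germ n.
Definition Hf_eq n (f : {mpoly C[n]}) (g1 g2 : lform n) : Prop :=
  exists N : nat,
    (forall (j : int) m, j < - (N%:Z) -> g1 j m = g2 j m) /\
    dfzd_exact f (fun j m => g1 (j%:Z - N%:Z) m - g2 (j%:Z - N%:Z) m).

Definition wdeg n (q : 'I_n -> rat) (m : 'X_{1..n}) : rat :=
  \sum_(i < n) (m i)%:R * q i.

Definition weighted_homogeneous n (q : 'I_n -> rat) (d : rat) (p : {mpoly C[n]}) :=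
  forall m, m \in msupp p -> wdeg q m = d.

Definition isolated_critical_point_at_0 n (f : {mpoly C[n]}) : Prop :=
  (forall i : 'I_n, (mderiv i f).@[fun _ => 0] = 0) /\
  exists eps : C, 0 < eps /\
    forall x : 'I_n -> C, (forall i, `|x i| < eps) ->
      (forall i, (mderiv i f).@[x] = 0) -> forall i, x i = 0.

(* F = f + sum_a s_a phi_a as a polynomial in x with coefficients in   *)
(* C[s] = C[s_1..s_mu];  coefficient extraction of s^a.                *)
Definition liftx n mu (p : {mpoly C[n]}) : {mpoly {mpoly C[mu]}[n]} :=
  map_mpoly (fun c : C => c%:MP) p.

Definition unfolding n mu (f : {mpoly C[n]}) (phi : 'I_mu -> {mpoly C[n]})
  : {mpoly {mpoly C[mu]}[n]} :=
  liftx mu f + \sum_(a < mu) ('X_a : {mpoly C[mu]})%:MP * liftx mu (phi a).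

Definition scoef n mu (a : 'X_{1..mu}) (P : {mpoly {mpoly C[mu]}[n]}) : {mpoly C[n]} :=
  map_mpoly (fun c : {mpoly C[mu]} => c@_a) P.

(* h = (h^(k)_{alpha beta, m}) is the expansion
   [z^-k (F-f)^k phi_alpha d^n x] = sum_{m>=-k} sum_beta h^(k)_{alpha beta,m} z^m [phi_beta d^n x]
   in H_f tensor C[s]_k, with h^(k)_{alpha beta, m} in C[s]_k.
   Equality in H_f tensor C[s]_k is checked coefficientwise in s^a. *)
Definition is_expansion n mu (f : {mpoly C[n]}) (phi : 'I_mu -> {mpoly C[n]})
  (h : nat -> 'I_mu -> 'I_mu -> int -> {mpoly C[mu]}) : Prop :=
  forall (k : nat) (al : 'I_mu),
    (forall be m, {in msupp (h k al be m), forall a, mdeg a = k}) /\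
    (forall be (m : int), m < - (k%:Z) -> h k al be m = 0) /\
    (forall a : 'X_{1..mu},
       Hf_eq f
         (fun (j : int) x =>
            if j == - (k%:Z)
            then (scoef a ((unfolding f phi - liftx mu f) ^+ k * liftx mu (phi al)))@_x
            else 0)
         (fun (j : int) x => \sum_(be < mu) (h k al be j)@_a * (phi be)@_x)).

(* C((z))[[s]] : coefficient families x a m  (a an s-monomial, m in Z),*)
(* with, for each a, x a bounded below in m.                           *)
Definition LS (mu : nat) := 'X_{1..mu} -> int -> C.

Definition laurent (u : int -> C) : Prop := exists N : int, forall m, m < N -> u m = 0.
Definition LS_ok mu (x : LS mu) : Prop := forall a, laurent (x a).

(* a lower bound of the support of a Laurent series (0 if none exists) *)
Definition lbound (u : int -> C) : int :=
  match excluded_middle_informative (laurent u) with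
  | left H => proj1_sig (constructive_indefinite_description _ H)
  | right _ => 0
  end.

Definition lmul (u v : int -> C) : int -> C := fun m =>
  \sum_(t < absz (Num.max 0%Z (m - lbound u - lbound v + 1)))
     u (lbound u + t%:Z) * v (m - lbound u - t%:Z).

Definition LSadd mu (x y : LS mu) : LS mu := fun a m => x a m + y a m.
Definition LSmul mu (x y : LS mu) : LS mu := fun a m =>
  \sum_(b : 'X_{1..mu < (mdeg a).+1} | (b <= a)%MM) lmul (x b) (y (a - b)%MM) m.
Definition LSconst mu (c : C) : LS mu := fun a m =>
  if (a == 0%MM) && (m == 0) then c else 0.

(* free C((z))[[s]]-modules of rank mu, written in coordinates:
   B_F((z))[[s]] w.r.t. {phi_alpha d^n x}, B((z))[[s]] w.r.t. {[phi_beta d^n x]} *)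
Definition LSvec mu := 'I_mu -> LS mu.
Definition LSvec_ok mu (v : LSvec mu) : Prop := forall i, LS_ok (v i).

(* the element e^{(F-f)/z}(phi_alpha d^n x) of B((z))[[s]]: its coefficient
   on s^a z^m [phi_beta d^n x] is  sum_k h^(k)_{alpha beta,m}|_{s^a} / k!,
   where only k = |a| contributes (h^(k) is homogeneous of degree k). *)
Definition eFf mu (h : nat -> 'I_mu -> 'I_mu -> int -> {mpoly C[mu]}) (al : 'I_mu)
  : LSvec mu := fun be a m => (h (mdeg a) al be m)@_a / ((mdeg a)`!)%:R.

Definition basisF mu (al : 'I_mu) : LSvec mu := fun ga => @LSconst mu (ga == al)%:R.

From HB Require Import structures.
From mathcomp Require Import all_boot all_order all_algebra.
From mathcomp Require Import mpoly complex Rstruct.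
From mathcomp Require Import zify ring.
From Stdlib Require Import ClassicalEpsilon FunctionalExtensionality.
Import Order.TTheory GRing.Theory Num.Theory.
Local Open Scope ring_scope.
Set Implicit Arguments. Unset Strict Implicit. Unset Printing Implicit Defensive.

(* The s^0-part of e^{(F-f)/z} is the identity: for k = 0 the expansion writes
   [phi_al d^n x] in the good basis, whose coordinates are unique.  Hence the
   matrix E of e^{(F-f)/z} over C((z))[[s]] is unipotent, E = 1 + N with N of
   positive s-degree, and v |-> v E is a C((z))[[s]]-linear bijection: the
   equation v + v N = w is solved degree by degree in s, since the s^a-coefficient
   of v N only involves coefficients of v in degrees strictly below a. *)

Definition vanishes_below (L : int) (u : int -> C) := forall m, m < L -> u m = 0.

Lemma lbound_vanishes u : laurent u -> vanishes_below (lbound u) u.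
Proof.
move=> H; rewrite /lbound; case: excluded_middle_informative => // H'.
by case: (constructive_indefinite_description _ H').
Qed.

Lemma vanishes_below_le L L' u : L' <= L -> vanishes_below L u -> vanishes_below L' u.
Proof. by move=> hL H m hm; apply: H; lia. Qed.

Definition window_sum (g : int -> C) (L : int) (K : nat) := \sum_(t < K) g (L + t%:Z).

Lemma window_sum_widen g L K K' B :
  (forall i, B < i -> g i = 0) -> B < L + K%:Z -> (K <= K')%N ->
  window_sum g L K = window_sum g L K'.
Proof.
move=> Hg HB HK; rewrite /window_sum -!(big_mkord xpredT (fun t => g (L + t%:Z))).
rewrite (@big_cat_nat _ _ _ K 0 K' _ _ (leq0n K) HK) /= [X in _ = _ + X]big1_seq ?addr0 //.
move=> t /andP[_]; rewrite mem_index_iota => /andP[h1 h2]; apply: Hg; lia.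
Qed.

Lemma window_sum_shift g L (d K : nat) : vanishes_below (L + d%:Z) g ->
  window_sum g L (d + K) = window_sum g (L + d%:Z) K.
Proof.
move=> Hg; rewrite /window_sum big_split_ord /= big1 ?add0r.
  by apply: eq_bigr => t _; rewrite PoszD addrA.
move=> t _; apply: Hg; have := ltn_ord t; lia.
Qed.

Lemma window_sum_support g A B L L' K K' :
  vanishes_below A g -> (forall i, B < i -> g i = 0) ->
  L <= A -> L' <= A -> B < L + K%:Z -> B < L' + K'%:Z ->
  window_sum g L K = window_sum g L' K'.
Proof.
move=> hA hB hL hL' hK hK'.
have to_A L0 K0 : L0 <= A -> B < L0 + K0%:Z -> window_sum g L0 K0 = window_sum g A K0.
  move=> hL0 hK0; have EA : L0 + (absz (A - L0))%:Z = A by lia.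
  rewrite (@window_sum_widen g L0 K0 (absz (A - L0) + K0) B) ?leq_addl //.
  by rewrite window_sum_shift EA.
rewrite (to_A _ _ hL hK) (to_A _ _ hL' hK').
rewrite (@window_sum_widen g A K (maxn K K') B) ?leq_maxl //; last lia.
by rewrite [RHS](@window_sum_widen g A K' (maxn K K') B) ?leq_maxr //; lia.
Qed.

(* [lmul] is defined through the bounds chosen by [lbound]; this identifies it
   with the Cauchy product computed over any window containing the support. *)
Lemma lmul_window u v Lu Lv L K m :
  vanishes_below Lu u -> vanishes_below Lv v -> L <= Lu -> m - Lv < L + K%:Z ->
  lmul u v m = window_sum (fun i => u i * v (m - i)) L K.
Proof.
move=> hu hv hL hK.
have lu := lbound_vanishes (ex_intro _ Lu hu).
have lv := lbound_vanishes (ex_intro _ Lv hv).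
have -> : lmul u v m = window_sum (fun i => u i * v (m - i)) (lbound u)
     (absz (Num.max 0%Z (m - lbound u - lbound v + 1))).
  by apply: eq_bigr => t _; congr (_ * v _); ring.
apply: (@window_sum_support _ (Num.max Lu (lbound u)) (m - Num.max Lv (lbound v))).
- move=> i hi; case: (boolP (i < Lu)) => h; first by rewrite hu ?mul0r.
  by rewrite lu ?mul0r //; lia.
- move=> i hi; case: (boolP (m - i < Lv)) => h; first by rewrite hv ?mulr0.
  by rewrite lv ?mulr0 //; lia.
all: lia.
Qed.

Lemma lmul_vanishes u v Lu Lv :
  vanishes_below Lu u -> vanishes_below Lv v -> vanishes_below (Lu + Lv) (lmul u v).
Proof.
move=> hu hv m hm; rewrite (@lmul_window u v Lu Lv Lu 0 m hu hv) //; last lia.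
by rewrite /window_sum big_ord0.
Qed.

Lemma lmul_laurent u v : laurent u -> laurent v -> laurent (lmul u v).
Proof. by move=> [Lu hu] [Lv hv]; exists (Lu + Lv); apply: lmul_vanishes. Qed.

Lemma lmul_eq0l u v m : (forall k, u k = 0) -> lmul u v m = 0.
Proof. by move=> H; rewrite /lmul big1 // => t _; rewrite H mul0r. Qed.

Lemma lmul_eq0r u v m : (forall k, v k = 0) -> lmul u v m = 0.
Proof. by move=> H; rewrite /lmul big1 // => t _; rewrite H mulr0. Qed.

Lemma laurentD u u' : laurent u -> laurent u' -> laurent (fun m => u m + u' m).
Proof.
move=> [L hu] [L' hu']; exists (Num.min L L') => m hm.
by rewrite hu ?hu' ?addr0 //; lia.
Qed.

Lemma laurentN u : laurent u -> laurent (fun m => - u m).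
Proof. by move=> [L hu]; exists L => m hm; rewrite hu ?oppr0. Qed.

Lemma laurent_sum (I : Type) (r : seq I) (U : I -> int -> C) :
  (forall i, laurent (U i)) -> laurent (fun m => \sum_(i <- r) U i m).
Proof.
move=> H; elim: r => [|i r IH]; first by exists 0 => m _; rewrite big_nil.
have [L hL] := laurentD (H i) IH.
by exists L => m hm; rewrite big_cons; apply: hL.
Qed.

Lemma lmulDl u u' v m : laurent u -> laurent u' -> laurent v ->
  lmul (fun k => u k + u' k) v m = lmul u v m + lmul u' v m.
Proof.
move=> [L hu] [L' hu'] [Lv hv]; set L0 := Num.min L L'.
have h0 : vanishes_below L0 u by apply: vanishes_below_le hu; lia.
have h1 : vanishes_below L0 u' by apply: vanishes_below_le hu'; lia.
have h2 : vanishes_below L0 (fun k => u k + u' k) by move=> k hk; rewrite h0 ?h1 ?addr0.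
set K := (absz (m - Lv - L0)%R).+1.
rewrite !(@lmul_window _ _ L0 Lv L0 K m) //; try lia.
by rewrite /window_sum -big_split; apply: eq_bigr => t _; rewrite mulrDl.
Qed.

Lemma lmulDr u v v' m : laurent u -> laurent v -> laurent v' ->
  lmul u (fun k => v k + v' k) m = lmul u v m + lmul u v' m.
Proof.
move=> [Lu hu] [L hv] [L' hv']; set L0 := Num.min L L'.
have h0 : vanishes_below L0 v by apply: vanishes_below_le hv; lia.
have h1 : vanishes_below L0 v' by apply: vanishes_below_le hv'; lia.
have h2 : vanishes_below L0 (fun k => v k + v' k) by move=> k hk; rewrite h0 ?h1 ?addr0.
set K := (absz (m - Lu - L0)%R).+1.
rewrite !(@lmul_window _ _ Lu L0 Lu K m) //; try lia.
by rewrite /window_sum -big_split; apply: eq_bigr => t _; rewrite mulrDr.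
Qed.

Lemma lmul_suml (I : Type) (r : seq I) (U : I -> int -> C) v m :
  (forall i, laurent (U i)) -> laurent v ->
  lmul (fun k => \sum_(i <- r) U i k) v m = \sum_(i <- r) lmul (U i) v m.
Proof.
move=> hU hv; elim: r => [|i r IH]; first by rewrite big_nil lmul_eq0l // => k; rewrite big_nil.
rewrite big_cons -IH -lmulDl //; last exact: laurent_sum.
by congr lmul; apply: functional_extensionality => k; rewrite big_cons.
Qed.

Lemma lmul_sumr (I : Type) (r : seq I) u (U : I -> int -> C) m :
  laurent u -> (forall i, laurent (U i)) ->
  lmul u (fun k => \sum_(i <- r) U i k) m = \sum_(i <- r) lmul u (U i) m.
Proof.
move=> hu hU; elim: r => [|i r IH]; first by rewrite big_nil lmul_eq0r // => k; rewrite big_nil.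
rewrite big_cons -IH -lmulDr //; last exact: laurent_sum.
by congr lmul; apply: functional_extensionality => k; rewrite big_cons.
Qed.

Lemma lmulA u v w m : laurent u -> laurent v -> laurent w ->
  lmul (lmul u v) w m = lmul u (lmul v w) m.
Proof.
move=> [Lu hu] [Lv hv] [Lw hw]; set K := (absz (m - Lu - Lv - Lw)%R).+1.
rewrite (@lmul_window _ _ (Lu + Lv) Lw (Lu + Lv) K m (lmul_vanishes hu hv) hw) //; last lia.
rewrite (@lmul_window _ _ Lu (Lv + Lw) Lu K m hu (lmul_vanishes hv hw)) //; last lia.
rewrite /window_sum.
transitivity (\sum_(t < K) \sum_(s < K)
   u (Lu + s%:Z) * v (Lv + t%:Z - s%:Z) * w (m - (Lu + Lv + t%:Z))).
  apply: eq_bigr => t _.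
  rewrite (@lmul_window _ _ Lu Lv Lu K _ hu hv) //; last by have := ltn_ord t; lia.
  by rewrite /window_sum mulr_suml; apply: eq_bigr => s _; congr (_ * v _ * _); ring.
rewrite exchange_big /=; apply: eq_bigr => s _.
rewrite (@lmul_window _ _ Lv Lw (Lv - s%:Z) K _ hv hw); try lia.
rewrite /window_sum mulr_sumr; apply: eq_bigr => t _; rewrite mulrA.
by congr (_ * v _ * w _); ring.
Qed.

Definition lconst (c : C) : int -> C := fun k => if k == 0 then c else 0.

Lemma lconst_vanishes c : vanishes_below 0 (lconst c).
Proof. by move=> k hk; rewrite /lconst; case: eqP => // e; move: hk; rewrite e. Qed.

Lemma lmul_constl c v m : laurent v -> lmul (lconst c) v m = c * v m.
Proof.
move=> [Lv hv].
rewrite (@lmul_window _ _ 0 Lv 0 (absz (m - Lv)%R).+1 m (lconst_vanishes c) hv) //; last lia.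
rewrite /window_sum big_ord_recl /= big1 ?addr0 => [|t _]; last by rewrite mul0r.
by congr (_ * v _); ring.
Qed.

Lemma lmul_constr u c m : laurent u -> lmul u (lconst c) m = u m * c.
Proof.
move=> [Lu hu].
rewrite (@lmul_window _ _ Lu 0 Lu (absz (m - Lu)%R).+1 m hu (lconst_vanishes c)) //; last lia.
rewrite /window_sum /lconst; case: (boolP (m < Lu)) => hm.
  rewrite hu // mul0r big1 // => t _; case: eqP => [e|]; last by rewrite mulr0.
  have := ltn_ord t; lia.
have ht : (absz (m - Lu) < (absz (m - Lu)%R).+1)%N by [].
rewrite (bigD1 (Ordinal ht)) //= big1 ?addr0.
  have -> : Lu + (absz (m - Lu))%:Z = m by lia.
  by rewrite subrr eqxx.
move=> t /eqP ne; case: eqP => [e|]; last by rewrite mulr0.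
by exfalso; apply: ne; apply: val_inj => /=; lia.
Qed.

Section MonomialDivisors.
Variable n : nat.
Implicit Types (a b c d : 'X_{1..n}).

Definition mdivisors a : seq 'X_{1..n} :=
  [seq bmnm x | x <- enum [set: 'X_{1..n < (mdeg a).+1}] & (bmnm x <= a)%MM].

Lemma submm a : (a - a)%MM = 0%MM.
Proof. by rewrite -{1}[a]add0m addmK. Qed.

Lemma mdeg_lepm b a : (b <= a)%MM -> (mdeg b <= mdeg a)%N.
Proof. by move=> h; rewrite -(submK h) mdegD leq_addl. Qed.

Lemma mdeg_ltpm b a : (b <= a)%MM -> b != a -> (mdeg b < mdeg a)%N.
Proof.
move=> h ne; rewrite -(submK h) mdegD -{1}[mdeg b]add0n ltn_add2r lt0n mdeg_eq0.
by apply: contra ne => /eqP e; rewrite -(submK h) e add0m.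
Qed.

Lemma mem_mdivisors a b : (b \in mdivisors a) = (b <= a)%MM.
Proof.
apply/idP/idP; first by case/mapP => x; rewrite mem_filter => /andP[h _] ->.
move=> h; have hd : (mdeg b < (mdeg a).+1)%N by rewrite ltnS mdeg_lepm.
apply/mapP; exists (BMultinom hd) => //.
by rewrite mem_filter /= h mem_enum in_setT.
Qed.

Lemma uniq_mdivisors a : uniq (mdivisors a).
Proof.
by rewrite map_inj_uniq ?filter_uniq ?enum_uniq ?index_enum_uniq // => x y e; apply: val_inj.
Qed.

Lemma mdivisors_sub a a' : (a' <= a)%MM ->
  perm_eq (mdivisors a') [seq b <- mdivisors a | (b <= a')%MM].
Proof.
move=> h; apply: uniq_perm; rewrite ?filter_uniq ?uniq_mdivisors // => b.
rewrite mem_filter !mem_mdivisors; case: (boolP (b <= a')%MM) => //= hb.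
by rewrite (lepm_trans hb h).
Qed.

Lemma mdivisors_add a c : (c <= a)%MM ->
  perm_eq [seq (c + d)%MM | d <- mdivisors (a - c)] [seq b <- mdivisors a | (c <= b)%MM].
Proof.
move=> h; apply: uniq_perm.
- by rewrite map_inj_uniq ?uniq_mdivisors //; exact: addmI.
- by rewrite filter_uniq ?uniq_mdivisors.
move=> b; rewrite mem_filter mem_mdivisors; apply/mapP/idP.
  case=> d; rewrite mem_mdivisors => hd ->; rewrite lem_addr /=.
  apply/mnm_lepP => i; move/mnm_lepP: hd => /(_ i); move/mnm_lepP: h => /(_ i).
  rewrite mnmDE mnmBE; lia.
case/andP=> h1 h2; exists (b - c)%MM.
  rewrite mem_mdivisors; apply/mnm_lepP => i; move/mnm_lepP: h2 => /(_ i).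
  by move/mnm_lepP: h1 => /(_ i); rewrite !mnmBE; lia.
by apply/mnmP => i; move/mnm_lepP: h1 => /(_ i); rewrite mnmDE mnmBE; lia.
Qed.

Lemma mdivisors_sum_pairs a (F : 'X_{1..n} -> 'X_{1..n} -> 'X_{1..n} -> C) :
  \sum_(b <- mdivisors a) \sum_(c <- mdivisors b) F c (b - c)%MM (a - b)%MM =
  \sum_(c <- mdivisors a) \sum_(d <- mdivisors (a - c)) F c d (a - c - d)%MM.
Proof.
transitivity (\sum_(b <- mdivisors a) \sum_(c <- mdivisors a | (c <= b)%MM)
                 F c (b - c)%MM (a - b)%MM).
  rewrite [LHS]big_seq [RHS]big_seq; apply: eq_bigr => b; rewrite mem_mdivisors => hb.
  by rewrite (perm_big _ (mdivisors_sub hb)) big_filter.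
rewrite (exchange_big_dep xpredT) //=.
rewrite [LHS]big_seq [RHS]big_seq; apply: eq_bigr => c; rewrite mem_mdivisors => hc.
rewrite -big_filter -(perm_big _ (mdivisors_add hc)) big_map.
by apply: eq_bigr => d _; rewrite submDA {1}[(c + d)%MM]addmC addmK.
Qed.
End MonomialDivisors.

Section PowerSeriesOverLaurent.
Variable mu : nat.
Implicit Types (x y z r : LS mu) (a b : 'X_{1..mu}).

Lemma LSmulE x y a m :
  LSmul x y a m = \sum_(b <- mdivisors a) lmul (x b) (y (a - b)%MM) m.
Proof.
rewrite /LSmul /mdivisors big_map big_filter big_enum_cond /=.
by apply: eq_bigl => b; rewrite in_setT.
Qed.

Lemma LSmulE_fun x y a :
  LSmul x y a = fun m => \sum_(b <- mdivisors a) lmul (x b) (y (a - b)%MM) m.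
Proof. by apply: functional_extensionality => m; rewrite LSmulE. Qed.

Lemma LSmul_ok x y : LS_ok x -> LS_ok y -> LS_ok (LSmul x y).
Proof.
by move=> hx hy a; rewrite LSmulE_fun; apply: laurent_sum => b; apply: lmul_laurent.
Qed.

Lemma LSconst_ok c : LS_ok (@LSconst mu c).
Proof.
move=> a; exists 0 => m hm; rewrite /LSconst.
by case: eqP => //= _; case: eqP => // e; move: hm; rewrite e.
Qed.

Lemma LSmulDl x x' y a m : LS_ok x -> LS_ok x' -> LS_ok y ->
  LSmul (LSadd x x') y a m = LSmul x y a m + LSmul x' y a m.
Proof.
move=> hx hx' hy; rewrite !LSmulE -big_split; apply: eq_bigr => b _.
by rewrite /LSadd lmulDl.
Qed.

Lemma LSmulDr x y y' a m : LS_ok x -> LS_ok y -> LS_ok y' ->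
  LSmul x (LSadd y y') a m = LSmul x y a m + LSmul x y' a m.
Proof.
move=> hx hy hy'; rewrite !LSmulE -big_split; apply: eq_bigr => b _.
by rewrite /LSadd lmulDr.
Qed.

Lemma LSmul_sumr (I : Type) (s : seq I) r (X : I -> LS mu) a m :
  LS_ok r -> (forall i, LS_ok (X i)) ->
  LSmul r (fun a m => \sum_(i <- s) X i a m) a m = \sum_(i <- s) LSmul r (X i) a m.
Proof.
move=> hr hX; rewrite LSmulE.
transitivity (\sum_(b <- mdivisors a) \sum_(i <- s) lmul (r b) (X i (a - b)%MM) m).
  apply: eq_bigr => b _.
  by rewrite (@lmul_sumr I s (r b) (fun i => X i (a - b)%MM)) // => i; apply: hX.
by rewrite exchange_big; apply: eq_bigr => i _; rewrite LSmulE.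
Qed.

Lemma LSmulA x y z a m : LS_ok x -> LS_ok y -> LS_ok z ->
  LSmul (LSmul x y) z a m = LSmul x (LSmul y z) a m.
Proof.
move=> hx hy hz; rewrite LSmulE.
transitivity (\sum_(b <- mdivisors a) \sum_(c <- mdivisors b)
   lmul (x c) (lmul (y (b - c)%MM) (z (a - b)%MM)) m).
  apply: eq_bigr => b _; rewrite LSmulE_fun lmul_suml => [|c|//]; last exact: lmul_laurent.
  by apply: eq_bigr => c _; rewrite lmulA.
rewrite (mdivisors_sum_pairs a (fun c d e => lmul (x c) (lmul (y d) (z e)) m)) LSmulE.
apply: eq_bigr => c _; rewrite LSmulE_fun lmul_sumr // => d.
exact: lmul_laurent.
Qed.

Lemma LSconstE c b : @LSconst mu c b = if b == 0%MM then lconst c else fun _ => 0.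
Proof. by apply: functional_extensionality => k; rewrite /LSconst; case: (b == 0%MM). Qed.

Lemma LSmul_constl c y a m : LS_ok y -> LSmul (@LSconst mu c) y a m = c * y a m.
Proof.
move=> hy; rewrite LSmulE (bigD1_seq 0%MM) ?uniq_mdivisors //; last first.
  by rewrite mem_mdivisors; apply/mnm_lepP => i; rewrite mnm0E.
rewrite /= LSconstE eqxx lmul_constl // subm0 big1 ?addr0 // => b /negbTE nb.
by rewrite LSconstE nb lmul_eq0l.
Qed.

Lemma LSmul_constr c x a m : LS_ok x -> LSmul x (@LSconst mu c) a m = x a m * c.
Proof.
move=> hx; rewrite LSmulE (bigD1_seq a) ?uniq_mdivisors ?mem_mdivisors ?lepm_refl //.
rewrite /= submm LSconstE eqxx lmul_constr // big1_seq ?addr0 // => b /andP[nb].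
rewrite mem_mdivisors => hb; rewrite LSconstE.
case: eqP => [e|]; last by rewrite lmul_eq0r.
exfalso; move/negP: nb; apply; apply/eqP/mnmP => i.
move/mnmP: e => /(_ i); move/mnm_lepP: hb => /(_ i); rewrite mnmBE mnm0E; lia.
Qed.
End PowerSeriesOverLaurent.

Section StrictPerturbationOfIdentity.
Variables (mu : nat) (M : LSvec mu -> LSvec mu).
Hypothesis M_ok : forall v, LSvec_ok v -> LSvec_ok (M v).
Hypothesis M_strict : forall v v' be a m,
  (forall al b, (b <= a)%MM -> b != a -> v al b = v' al b) -> M v be a m = M v' be a m.

Lemma add_strict_inj v w :
  (forall be a m, v be a m + M v be a m = w be a m + M w be a m) -> v = w.
Proof.
move=> e.
have agree d a : (mdeg a < d)%N -> forall al, v al a = w al a.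
  elim: d a => [//|d IH] a ha al; apply: functional_extensionality => m.
  move: (e al a m); rewrite (@M_strict v w) => [/addIr //|ga b hb nb].
  by apply: IH; have := mdeg_ltpm hb nb; lia.
do 2!apply: functional_extensionality => ?; exact: agree (ltnSn _) _.
Qed.

(* [add_strict_approx w k] solves [v + M v = w] in all s-degrees below [k]. *)
Fixpoint add_strict_approx (w : LSvec mu) (k : nat) : LSvec mu :=
  if k is k'.+1 then fun be a m => w be a m - M (add_strict_approx w k') be a m else w.

Lemma add_strict_approx_ok w k : LSvec_ok w -> LSvec_ok (add_strict_approx w k).
Proof.
move=> hw; elim: k => [//|k IH] be a /=.
by apply: laurentD; [exact: hw | apply: laurentN; exact: M_ok].
Qed.

Lemma add_strict_approx_stable w k a al : (mdeg a < k)%N ->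
  add_strict_approx w k.+1 al a = add_strict_approx w k al a.
Proof.
elim: k a al => [//|k IH] a al ha; apply: functional_extensionality => m /=.
congr (_ - _); apply: M_strict => ga b hb nb; apply: IH.
by have := mdeg_ltpm hb nb; lia.
Qed.

Lemma add_strict_approx_stableD w a al j :
  add_strict_approx w ((mdeg a).+1 + j) al a = add_strict_approx w (mdeg a).+1 al a.
Proof.
elim: j => [|j IH]; first by rewrite addn0.
by rewrite addnS add_strict_approx_stable // ltnS leq_addr.
Qed.

Lemma add_strict_surj w : LSvec_ok w ->
  exists2 v, LSvec_ok v & forall be a m, v be a m + M v be a m = w be a m.
Proof.
move=> hw; exists (fun al a => add_strict_approx w (mdeg a).+1 al a).
  by move=> al a; apply: add_strict_approx_ok.
move=> be a m; rewrite (@M_strict _ (add_strict_approx w (mdeg a)) be a m) /=.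
  by rewrite subrK.
move=> ga b hb nb; have hlt := mdeg_ltpm hb nb.
have -> : mdeg a = ((mdeg b).+1 + (mdeg a - (mdeg b).+1))%N by lia.
by rewrite add_strict_approx_stableD.
Qed.
End StrictPerturbationOfIdentity.

Definition LSmulmx mu (v : LSvec mu) (E : 'I_mu -> LSvec mu) : LSvec mu :=
  fun be a m => \sum_(al < mu) LSmul (v al) (E al be) a m.

Definition LSmx_strict mu (E : 'I_mu -> LSvec mu) al be : LS mu :=
  fun a m => if a == 0%MM then 0 else E al be a m.

Lemma LSmulmx_ok mu (v : LSvec mu) (N : 'I_mu -> LSvec mu) :
  LSvec_ok v -> (forall al be, LS_ok (N al be)) -> LSvec_ok (LSmulmx v N).
Proof. by move=> hv hN be a; apply: laurent_sum => al; apply: LSmul_ok. Qed.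

Section UnipotentMatrix.
Variables (mu : nat) (E : 'I_mu -> LSvec mu).
Hypothesis E_ok : forall al be, LS_ok (E al be).
Hypothesis E_const : forall al be m, E al be 0%MM m = ((al == be) && (m == 0))%:R.

Lemma LSmx_strict_ok al be : LS_ok (LSmx_strict E al be).
Proof. by move=> a; rewrite /LSmx_strict; case: (a == 0%MM); [exists 0 | exact: E_ok]. Qed.

Lemma LSmulmx_strict v v' be a m :
  (forall al b, (b <= a)%MM -> b != a -> v al b = v' al b) ->
  LSmulmx v (LSmx_strict E) be a m = LSmulmx v' (LSmx_strict E) be a m.
Proof.
move=> H; apply: eq_bigr => al _; rewrite !LSmulE.
rewrite big_seq [RHS]big_seq; apply: eq_bigr => b; rewrite mem_mdivisors => hb.
have [->|nb] := eqVneq b a; last by rewrite H.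
by rewrite !lmul_eq0r // => k; rewrite /LSmx_strict submm eqxx.
Qed.

Lemma LSmx_unipotent al be :
  E al be = LSadd (LSconst (al == be)%:R) (LSmx_strict E al be).
Proof.
do 2!apply: functional_extensionality => ?.
rewrite /LSadd /LSconst /LSmx_strict; case: eqP => [->|_] /=; last by rewrite add0r.
by rewrite E_const addr0; case: (_ == 0); case: (al == be).
Qed.

Lemma LSmulmx_split v be a m : LSvec_ok v ->
  LSmulmx v E be a m = v be a m + LSmulmx v (LSmx_strict E) be a m.
Proof.
move=> hv; transitivity (\sum_(al < mu)
    (v al a m * (al == be)%:R + LSmul (v al) (LSmx_strict E al be) a m)).
  apply: eq_bigr => al _; rewrite LSmx_unipotent LSmulDr ?LSmul_constr //.
    exact: LSconst_ok.
  exact: LSmx_strict_ok.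
rewrite big_split /= (bigD1 be) //= eqxx mulr1 big1 ?addr0 // => al /negbTE ->.
by rewrite mulr0.
Qed.

Lemma LSmulmx_inj v w : LSvec_ok v -> LSvec_ok w -> LSmulmx v E = LSmulmx w E -> v = w.
Proof.
move=> hv hw e.
apply: (@add_strict_inj _ (fun v => LSmulmx v (LSmx_strict E))
          (fun v v' be a m => @LSmulmx_strict v v' be a m)).
by move=> be a m; rewrite -!LSmulmx_split // e.
Qed.

Lemma LSmulmx_surj w : LSvec_ok w -> exists2 v, LSvec_ok v & LSmulmx v E = w.
Proof.
move=> hw; have [v hv e] := @add_strict_surj _ (fun v => LSmulmx v (LSmx_strict E))
  (fun v hv => LSmulmx_ok hv LSmx_strict_ok)
  (fun v v' be a m => @LSmulmx_strict v v' be a m) _ hw.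
exists v => //; do 3!apply: functional_extensionality => ?.
by rewrite LSmulmx_split.
Qed.
End UnipotentMatrix.

Lemma LSmulmx_basisF mu (E : 'I_mu -> LSvec mu) al :
  (forall ga be, LS_ok (E ga be)) -> LSmulmx (basisF al) E = E al.
Proof.
move=> hE; apply: functional_extensionality => be.
do 2!apply: functional_extensionality => ?.
rewrite /LSmulmx (bigD1 al) //= LSmul_constl // eqxx mul1r big1 ?addr0 // => ga nga.
by rewrite LSmul_constl // (negbTE nga) mul0r.
Qed.

Lemma LSmulmx_add mu (E : 'I_mu -> LSvec mu) v w :
  (forall al be, LS_ok (E al be)) -> LSvec_ok v -> LSvec_ok w ->
  LSmulmx (fun i => LSadd (v i) (w i)) E = fun i => LSadd (LSmulmx v E i) (LSmulmx w E i).
Proof.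
move=> hE hv hw; do 3!apply: functional_extensionality => ?.
by rewrite /LSmulmx /LSadd -big_split; apply: eq_bigr => al _; apply: LSmulDl.
Qed.

Lemma LSmulmx_scale mu (E : 'I_mu -> LSvec mu) r v :
  (forall al be, LS_ok (E al be)) -> LS_ok r -> LSvec_ok v ->
  LSmulmx (fun i => LSmul r (v i)) E = fun i => LSmul r (LSmulmx v E i).
Proof.
move=> hE hr hv; do 3!apply: functional_extensionality => ?.
rewrite /LSmulmx LSmul_sumr => [|//|al]; last exact: LSmul_ok.
by apply: eq_bigr => al _; rewrite LSmulA.
Qed.

Lemma dfzd_exact_ext n (f : {mpoly C[n]}) (g g' : zseries n) :
  (forall j m, g j m = g' j m) -> dfzd_exact f g -> dfzd_exact f g'.
Proof. by move=> H [eta [h1 h2]]; exists eta; split => // j m; rewrite -H. Qed.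

Lemma scoef0_liftx n mu (p : {mpoly C[n]}) x : (scoef 0%MM (liftx mu p))@_x = p@_x.
Proof. by rewrite !mcoeff_map_mpoly /= mcoeffC eqxx mulr1. Qed.

Section ExpansionMatrix.
Variables (n mu : nat) (f : {mpoly C[n]}) (phi : 'I_mu -> {mpoly C[n]}).
Variable h : nat -> 'I_mu -> 'I_mu -> int -> {mpoly C[mu]}.
Hypothesis hh : is_expansion f phi h.

Lemma eFf_ok al be : LS_ok (eFf h al be).
Proof.
move=> a; exists (- (mdeg a)%:Z) => m hm.
have [_ [hneg _]] := hh (mdeg a) al.
by rewrite /eFf hneg // mcoeff0 mul0r.
Qed.

(* At k = 0 the expansion reads [phi_al] = sum h^(0) z^m [phi_be]; uniqueness of
   coordinates in the basis forces h^(0)_{al be, m} = delta_{al be} delta_{m 0}. *)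
Lemma eFf_const al be m : is_H0_basis f phi ->
  eFf h al be 0%MM m = ((al == be) && (m == 0))%:R.
Proof.
move=> [_ huniq]; rewrite /eFf mdeg0 /= divr1.
have [_ [hneg hexp]] := hh 0%N al; have [N [_ hex]] := hexp 0%MM.
pose c (ga : 'I_mu) (j : nat) : C :=
  ((ga == al) && (j == N))%:R - (h 0%N al ga (j%:Z - N%:Z))@_0%MM.
have hc : dfzd_exact f (lincomb c phi).
  apply: dfzd_exact_ext hex => j x; rewrite /lincomb /c expr0 mul1r scoef0_liftx.
  symmetry; rewrite (eq_bigr (fun ga => ((ga == al) && (j == N))%:R * (phi ga)@_x
                - (h 0%N al ga (j%:Z - N%:Z))@_0%MM * (phi ga)@_x)) => [|ga _]; last first.
    exact: mulrBl.
  rewrite sumrB; congr (_ - _).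
  rewrite (bigD1 al) //= eqxx big1 ?addr0 => [|ga /negbTE ->]; last by rewrite mul0r.
  have -> : (j%:Z - N%:Z == - 0%:Z) = (j == N) by apply/eqP/eqP; lia.
  by case: (j == N); rewrite /= ?mul1r ?mul0r.
case: (boolP (m < 0)) => hm.
  have -> : (m == 0) = false by lia.
  by rewrite hneg ?mcoeff0 ?andbF // oppr0.
have := huniq c hc be (absz m + N)%N; rewrite /c.
have -> : (absz m + N)%N%:Z - N%:Z = m by lia.
have -> : (absz m + N == N)%N = (m == 0) by apply/eqP/eqP; lia.
by rewrite eq_sym => /eqP; rewrite subr_eq0 => /eqP <-.
Qed.
End ExpansionMatrix.

(* Only the basis property and the expansion are used: weighted homogeneity,
   the isolated singularity and phi_1 = 1 enter through the existence of the
   good basis, which the statement takes as a hypothesis. *)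
Unset Implicit Arguments.
Theorem proposition3p4
  (n mu : nat) (q : 'I_n -> rat) (f : {mpoly C[n]}) (phi : 'I_mu -> {mpoly C[n]})
  (hmu : (0 < mu)%N)
  (hq : forall i, 0 < q i)
  (hf : weighted_homogeneous q 1 f)
  (hiso : isolated_critical_point_at_0 f)
  (hphi_wh : forall al, exists d : rat, weighted_homogeneous q d (phi al))
  (hphi1 : phi (Ordinal hmu) = 1)
  (hbasis : is_H0_basis f phi)
  (h : nat -> 'I_mu -> 'I_mu -> int -> {mpoly C[mu]})
  (hh : is_expansion f phi h) :
  (forall al, LSvec_ok (eFf h al)) /\
  exists T : LSvec mu -> LSvec mu,
    (forall al, T (basisF al) = eFf h al) /\
    (forall v w, LSvec_ok v -> LSvec_ok w ->
       T (fun i => LSadd (v i) (w i)) = (fun i => LSadd (T v i) (T w i))) /\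
    (forall (r : LS mu) v, LS_ok r -> LSvec_ok v ->
       T (fun i => LSmul r (v i)) = (fun i => LSmul r (T v i))) /\
    (forall v, LSvec_ok v -> LSvec_ok (T v)) /\
    (forall v w, LSvec_ok v -> LSvec_ok w -> T v = T w -> v = w) /\
    (forall w, LSvec_ok w -> exists2 v, LSvec_ok v & T v = w).
Proof.
have E_ok := eFf_ok hh.
have E_const al be m := eFf_const hh al be m hbasis.
split; first by move=> al be; exact: E_ok.
exists (fun v => LSmulmx v (eFf h)); split; first by move=> al; exact: LSmulmx_basisF.
split; first by move=> v w; exact: LSmulmx_add.
split; first by move=> r v; exact: LSmulmx_scale.
split; first by move=> v hv; exact: LSmulmx_ok.
split; first by move=> v w; exact: LSmulmx_inj.
by move=> w; exact: LSmulmx_surj.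
Qed.
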